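(* Let $\mathcal{C}=\{C_1,\dots,C_m\}$ be a random 3XOR instance with $n$ variables and $m=cn$ equations, where $c\ge 10^{10}$. Then with probability $1-o(1)$, $\mathrm{GI}(G_{\mathcal{C}},G_{\mathcal{C}^0})<1-\frac{1}{95c^2}$.
   Context: A random 3XOR instance with $n$ variables and $m$ equations: choose $m$ unordered triples of distinct variables from the $\binom{n}{3}$ possible ones (uniformly at random) and make each triple $(x_{j_1},x_{j_2},x_{j_3})$ into an equation $x_{j_1}+x_{j_2}+x_{j_3}=b$ over $\mathbb{Z}_2$ with independent uniform $b$. $\mathcal{C}^0$ is obtained by replacing every right-hand side by $0$. Graph $G_{\mathcal{C}}$: for each variable $x$, two variable vertices $x\mapsto0,x\mapsto1$ joined by an edge; for each equation $C$ on $x_1,x_2,x_3$, four constraint vertices, one per satisfying assignment $(x_1\mapsto a_1,x_2\mapsto a_2,x_3\mapsto a_3)$ of $C$, forming a clique, each adjacent to the variable vertices $x_i\mapsto a_i$; variable vertices are shared across constraints, constraint vertices are not. $\mathrm{GI}(G,H)=\max_\pi\frac{|\{e\in E(G):\pi(e)\in E(H)\}|}{\max\{|E(G)|,|E(H)|\}}$ over bijections $\pi:V(G)\to V(H)$. *)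

From HB Require Import structures.
From mathcomp Require Import all_boot all_order all_algebra.
From mathcomp Require Import fingroup perm.
From mathcomp Require Import reals.
Set Implicit Arguments. Unset Strict Implicit. Unset Printing Implicit Defensive.
Import Order.TTheory GRing.Theory Num.Theory.
Local Open Scope ring_scope.

Notation Triple n := {t : {set 'I_n} | #|t| == 3%N}.

(* A 3XOR instance with n variables and m equations: the variable triple of
   each equation and its right-hand side. *)
Definition Instance (n m : nat) : finType :=
  ({ffun 'I_m -> Triple n} * {ffun 'I_m -> bool})%type.

(* Vertices of G_C: variable vertices (x |-> a) and, for every equation j, four
   constraint vertices indexed by (a1,a2) : bool * bool; the satisfying
   assignment is (x1|->a1, x2|->a2, x3|->a1+a2+b) where x1<x2<x3 are the
   variables of the equation. *)
Definition Vtx (n m : nat) : finType :=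
  (('I_n * bool) + ('I_m * (bool * bool)))%type.

(* the value assigned to variable x by the satisfying assignment p of
   equation j (meaningful when x belongs to the triple of j) *)
Definition assigned n m (T : {ffun 'I_m -> Triple n}) (b : {ffun 'I_m -> bool})
  (j : 'I_m) (p : bool * bool) (x : 'I_n) : bool :=
  let k := index x (enum (val (T j))) in
  if k == 0%N then p.1 else if k == 1%N then p.2 else addb (addb p.1 p.2) (b j).

Definition var_con n m (T : {ffun 'I_m -> Triple n}) (b : {ffun 'I_m -> bool}) (x : 'I_n) (a : bool) (j : 'I_m) (p : bool * bool) :=
  (x \in val (T j)) && (a == @assigned n m T b j p x).

Definition adjC n m (T : {ffun 'I_m -> Triple n}) (b : {ffun 'I_m -> bool})
  (u v : Vtx n m) : bool :=
  match u, v with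
  | inl (x, a), inl (y, a') => (x == y) && (a != a')
  | inr (j, p), inr (k, q) => (j == k) && (p != q)
  | inl (x, a), inr (j, p) => var_con T b x a j p
  | inr (j, p), inl (x, a) => var_con T b x a j p
  end.

Definition Edges (V : finType) (adj : rel V) : {set {set V}} :=
  [set e : {set V} | [exists u : V, exists v : V, adj u v && (e == [set u; v])]].

Definition GI (R : numFieldType) (V : finType) (adjG adjH : rel V) : R :=
  (\max_(pi : {perm V})
      #|[set e in Edges adjG | (pi @: e) \in Edges adjH]|)%N%:R
  / (maxn #|Edges adjG| #|Edges adjH|)%:R.

Definition GI_inst (R : numFieldType) n m (C : Instance n m) : R :=
  GI R (adjC C.1 C.2) (adjC C.1 [ffun _ => false]).

(* probability of an event under the uniform distribution on instances:
   triples chosen independently and uniformly, right-hand sides independent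
   uniform bits *)
Definition prob n m (E : pred (Instance n m)) (R : numFieldType) : R :=
  #|[set C | E C]|%:R / #|Instance n m|%:R.

From mathcomp Require Import all_boot all_order all_algebra.
From mathcomp Require Import reals.
From mathcomp Require Import fingroup perm.
From mathcomp Require Import zify ring lra.
Set Implicit Arguments. Unset Strict Implicit. Unset Printing Implicit Defensive.

(* Take a bijection pi with GI(G_C, G_C0) >= 1 - d, d = 1/(95 c^2); it loses at most
   d (2n + 28m) <= n/5 edges.  Read an assignment sigma off the images of the vertices
   x |-> 0, and let S be the variables whose own edge is lost, so |S| <= n/5.  If pi keeps
   every edge between the clique of an equation and its variable vertices, and sends those
   variable vertices to variable vertices, then it maps the clique onto a clique of C0 and
   the variables of the equation bijectively onto those of an equation of C0; comparing
   parities shows that sigma satisfies the equation unless all its variables lie in S.  At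
   most n/5 + 14n equations fail this test, so C has a pair (sigma, S) with 5|S| <= n
   violating at most 15n equations outside S.  For a fixed pair, weighting an instance by
   2^(number of equations satisfied or inside S) gives a Chernoff bound, and the union
   bound over the 4^n pairs leaves probability at most 2^-n once m >= 72n. *)

Lemma enum_card3 (T : finType) (A : {set T}) : #|A| = 3 ->
  exists y0 y1 y2, enum A = [:: y0; y1; y2] /\ [&& y0 != y1, y0 != y2 & y1 != y2].
Proof.
move=> A3; have := enum_uniq (pred_of_set A); rewrite cardE in A3.
case: (enum A) A3 => [|y0 [|y1 [|y2 [|]]]] //= _.
rewrite !inE !negb_or !andbT => /andP [/andP [d01 d02] d12].
by exists y0, y1, y2; rewrite d01 d02 d12.
Qed.

Section Assigned.
Variables (n m : nat) (T : {ffun 'I_m -> Triple n}) (b : {ffun 'I_m -> bool}) (j : 'I_m).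

Lemma assigned_enum : exists y0 y1 y2,
  [/\ enum (val (T j)) = [:: y0; y1; y2],
      [&& y0 != y1, y0 != y2 & y1 != y2],
      (forall p, assigned T b j p y0 = p.1), (forall p, assigned T b j p y1 = p.2) &
      (forall p, assigned T b j p y2 = addb (addb p.1 p.2) (b j))].
Proof.
have [y0 [y1 [y2 [Tj /and3P [d01 d02 d12]]]]] := enum_card3 (eqP (valP (T j))).
exists y0, y1, y2; split => [||p|p|p] //; first by rewrite d01 d02 d12.
all: by rewrite /assigned Tj /= ?eqxx ?(negbTE d01, negbTE d02, negbTE d12).
Qed.

Lemma assigned_indicator x0 : x0 \in val (T j) ->
  exists p, forall x, x \in val (T j) -> assigned T b j p x = (x == x0) && b j.
Proof.
have [y0 [y1 [y2 [Tj /and3P [d01 d02 d12] a0 a1 a2]]]] := assigned_enum.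
have memT x : (x \in val (T j)) = [|| x == y0, x == y1 | x == y2].
  by rewrite -mem_enum Tj !inE.
have [d10 d20 d21] : [/\ y1 == y0 = false, y2 == y0 = false & y2 == y1 = false].
  by rewrite (eq_sym y1) (eq_sym y2 y0) (eq_sym y2 y1); split; apply: negbTE.
rewrite memT => /or3P [] /eqP ->;
  [exists (b j, false) | exists (false, b j) | exists (false, false)] => x;
  rewrite memT => /or3P [] /eqP ->; rewrite ?a0 ?a1 ?a2 /= ?eqxx;
  by rewrite ?(negbTE d01, negbTE d02, negbTE d12, d10, d20, d21) //= ?addbF ?addFb ?addbb.
Qed.

Lemma assigned_surj x a : x \in val (T j) -> exists p, assigned T b j p x = a.
Proof.
have [y0 [y1 [y2 [Tj _ a0 a1 a2]]]] := assigned_enum.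
rewrite -mem_enum Tj !inE => /or3P [] /eqP ->.
- by exists (a, false); rewrite a0.
- by exists (false, a); rewrite a1.
- by exists (addb a (b j), false); rewrite a2 /= addbF -addbA addbb addbF.
Qed.

Lemma assigned_parity p : \big[addb/false]_(x in val (T j)) assigned T b j p x = b j.
Proof.
have [y0 [y1 [y2 [Tj _ a0 a1 a2]]]] := assigned_enum.
rewrite -big_enum Tj !big_cons big_nil a0 a1 a2.
by case: p => [[] []]; case: (b j).
Qed.

Lemma assigned_parity_image p (A : {set 'I_n}) (phi : 'I_n -> 'I_n) :
  #|A| = 3 -> {in A &, injective phi} -> {in A, forall x, phi x \in val (T j)} ->
  \big[addb/false]_(x in A) assigned T b j p (phi x) = b j.
Proof.
move=> A3 phi_inj phiT.
have imA : phi @: A = val (T j).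
  apply/eqP; rewrite eqEcard (card_in_imset phi_inj) A3 (eqP (valP (T j))) leqnn andbT.
  by apply/subsetP => _ /imsetP [x Ax ->]; apply: phiT.
by rewrite -big_imset // imA assigned_parity.
Qed.
End Assigned.

Definition is_var n m (u : Vtx n m) : bool := if u is inl _ then true else false.

Definition sign_of n m (u : Vtx n m) : bool := if u is inl (_, s) then s else false.

Lemma eq_set2 (T : finType) (u v u' v' : T) : [set u; v] = [set u'; v'] ->
  (u = u' /\ v = v') \/ (u = v' /\ v = u').
Proof.
move=> e.
have : u \in [set u'; v'] by rewrite -e set21.
have : v \in [set u'; v'] by rewrite -e set22.
have : u' \in [set u; v] by rewrite e set21.
have : v' \in [set u; v] by rewrite e set22.
by move=> /set2P [] ? /set2P [] ? /set2P [] ? /set2P [] ?; subst; tauto.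
Qed.

Section Graph.
Variables (n m : nat) (T : {ffun 'I_m -> Triple n}) (b : {ffun 'I_m -> bool}).
Notation V := (Vtx n m).
Notation adj := (adjC T b).

Lemma adjC_sym : symmetric adj.
Proof.
move=> [[x a]|[j p]] [[y c]|[k q]] //=.
- by rewrite (eq_sym y) (eq_sym c).
- by rewrite (eq_sym k) (eq_sym q).
Qed.

Lemma adjC_var_var x a y c : adj (inl (x, a)) (inl (y, c)) -> y = x /\ c = ~~ a.
Proof. by move=> /andP [/eqP ->]; case: a c => [] []. Qed.

Lemma adjC_var_nbrs x a y c u : adj (inl (x, a)) u -> adj (inl (y, c)) u ->
  is_var u -> (x, a) = (y, c).
Proof.
case: u => [[z d]|//] /adjC_var_var [-> ->] /adjC_var_var [-> /(congr1 negb)].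
by rewrite !negbK => ->.
Qed.

Lemma mem_Edges2 u v : ([set u; v] \in Edges adj) = adj u v.
Proof.
rewrite inE; apply/existsP/idP => [[u' /existsP [v' /andP [uv /eqP e]]]|uv].
  by case: (eq_set2 e) => [[-> ->] | [-> ->]] //; rewrite adjC_sym.
by exists u; apply/existsP; exists v; rewrite uv eqxx.
Qed.

Lemma EdgesP e : e \in Edges adj -> exists u v, e = [set u; v] /\ adj u v.
Proof. by rewrite inE => /existsP [u /existsP [v /andP [uv /eqP ->]]]; exists u, v. Qed.

Definition con_nbrs j p : seq V :=
  [seq inl (y, assigned T b j p y) | y <- enum (val (T j))] ++
  [seq inr (j, q) | q <- [:: (false, false); (false, true); (true, false); (true, true)]].

Lemma adjC_con_nth j p v : adj (inr (j, p)) v ->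
  exists k : 'I_7, forall d, nth d (con_nbrs j p) k = v.
Proof.
have size7 : size (con_nbrs j p) = 7.
  by rewrite size_cat !size_map -cardE (eqP (valP (T j))).
have mem_nbrs : adj (inr (j, p)) v -> v \in con_nbrs j p.
  rewrite mem_cat; case: v => [[y a]|[k q]] /=.
    by move=> /andP [Ty /eqP ->]; rewrite map_f ?mem_enum.
  by move=> /andP [/eqP <- _]; case: q => [[] []]; rewrite !inE eqxx ?orbT.
move=> /mem_nbrs v_in; have lt7 : index v (con_nbrs j p) < 7 by rewrite -size7 index_mem.
by exists (Ordinal lt7) => d /=; rewrite (set_nth_default v) ?index_mem ?nth_index.
Qed.

Lemma card_Edges : #|Edges adj| <= 2 * n + 28 * m.
Proof.
pose f (w : ('I_n * bool) + ('I_m * (bool * bool)) * 'I_7) : {set V} :=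
  match w with
  | inl xa => [set inl xa; inl (xa.1, ~~ xa.2)]
  | inr (jp, k) => [set inr jp; nth (inr jp) (con_nbrs jp.1 jp.2) k]
  end.
have sub : Edges adj \subset f @: predT.
  apply/subsetP => _ /EdgesP [u [v [-> uv]]]; apply/imsetP.
  case: u uv => [[x a]|[j p]] uv; last first.
    by have [k vk] := adjC_con_nth uv; exists (inr ((j, p), k)); rewrite //= vk.
  case: v uv => [[y c]|[j p]] uv.
    by have [-> ->] := adjC_var_var uv; exists (inl (x, a)).
  rewrite adjC_sym in uv; have [k vk] := adjC_con_nth uv.
  by exists (inr ((j, p), k)); rewrite //= vk setUC.
apply: leq_trans (subset_leq_card sub) (leq_trans (leq_imset_card _ _) _).
by rewrite card_sum !card_prod !card_ord card_bool; lia.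
Qed.

End Graph.

Lemma imset_set2 (aT rT : finType) (f : aT -> rT) (u v : aT) :
  f @: [set u; v] = [set f u; f v].
Proof. by rewrite imsetU1 imset_set1. Qed.

Definition sat_or_within n (sg : {ffun 'I_n -> bool}) (S : {set 'I_n})
    (t : Triple n) (be : bool) :=
  (\big[addb/false]_(x in val t) sg x == be) || (val t \subset S).

Section Alignment.
Variables (n m : nat) (T : {ffun 'I_m -> Triple n}) (b : {ffun 'I_m -> bool}).
Notation V := (Vtx n m).
Notation G := (adjC T b).
Notation H := (adjC T [ffun _ => false]).
Variable pi : {perm V}.

Definition lost_edges := [set e in Edges G | pi @: e \notin Edges H].

Definition pi_assignment : {ffun 'I_n -> bool} :=
  [ffun x => sign_of (pi (inl (x, false)))].

Definition broken_vars : {set 'I_n} :=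
  [set x | ~~ H (pi (inl (x, false))) (pi (inl (x, true)))].

Lemma card_broken_vars : #|broken_vars| <= #|lost_edges|.
Proof.
pose f x : {set V} := [set inl (x, false); inl (x, true)].
have f_inj : injective f by move=> x y /eq_set2 [] [[]].
rewrite -(card_imset _ f_inj); apply/subset_leq_card/subsetP => _ /imsetP [x xS ->].
by rewrite inE in xS; rewrite inE /f imset_set2 !mem_Edges2 /= eqxx xS.
Qed.

Lemma pi_assignment_flip x : x \notin broken_vars ->
  is_var (pi (inl (x, false))) -> is_var (pi (inl (x, true))) ->
  sign_of (pi (inl (x, true))) = ~~ pi_assignment x.
Proof.
rewrite inE negbK /pi_assignment ffunE.
case: (pi (inl (x, false))) => [[y c]|//]; case: (pi (inl (x, true))) => [[z s]|//].
by move=> /andP [_]; case: c; case: s.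
Qed.

Definition lost_incidences := [set vu : V * V |
  [&& is_var vu.1, ~~ is_var vu.2, G vu.1 vu.2 & ~~ H (pi vu.1) (pi vu.2)]].

Definition misplaced_incidences := [set vu : V * V |
  [&& is_var vu.1, ~~ is_var (pi vu.1) & H (pi vu.1) (pi vu.2)]].

Lemma card_lost_incidences : #|lost_incidences| <= #|lost_edges|.
Proof.
pose f (vu : V * V) : {set V} := [set vu.1; vu.2].
have f_inj : {in lost_incidences &, injective f}.
  move=> [v u] [v' u']; rewrite !inE /= => /and4P [v_var u_con _ _] /and4P [_ u'_con _ _].
  by move=> /eq_set2 /= [[-> ->] // | [ev _]]; move: v_var u'_con; rewrite ev => ->.
rewrite -(card_in_imset f_inj); apply/subset_leq_card/subsetP => _ /imsetP [[v u] + ->].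
by rewrite inE /= => /and4P [_ _ vu pivu]; rewrite inE /f imset_set2 !mem_Edges2 vu pivu.
Qed.

Lemma card_misplaced_incidences : #|misplaced_incidences| <= 14 * n.
Proof.
pose f (w : ('I_n * bool) * 'I_7) : V * V :=
  (inl w.1, (pi^-1)%g (if pi (inl w.1) is inr (j, p)
                       then nth (inl w.1) (con_nbrs T [ffun _ => false] j p) w.2
                       else inl w.1)).
have sub : misplaced_incidences \subset f @: predT.
  apply/subsetP => -[v u]; rewrite inE /= => /and3P [].
  case: v => [xa|//] _; case piv: (pi (inl xa)) => [//|[j p]] _ adj_u.
  have [k uk] := adjC_con_nth adj_u.
  by apply/imsetP; exists (xa, k); rewrite //= /f /= piv uk permK.
apply: leq_trans (subset_leq_card sub) (leq_trans (leq_imset_card _ _) _).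
by rewrite !card_prod !card_ord card_bool; lia.
Qed.

Definition aligned_at j p x :=
  let u := pi (inl (x, assigned T b j p x)) in is_var u && H u (pi (inr (j, p))).

Lemma aligned_parity j p : (forall x, x \in val (T j) -> aligned_at j p x) ->
  \big[addb/false]_(x in val (T j)) sign_of (pi (inl (x, assigned T b j p x))) = false.
Proof.
move=> al; pose a x := assigned T b j p x.
pose phi x := if pi (inl (x, a x)) is inl (y, _) then y else x.
pose s x := sign_of (pi (inl (x, a x))).
have piE x : x \in val (T j) -> pi (inl (x, a x)) = inl (phi x, s x).
  by move=> /al; rewrite /aligned_at /phi /s; case: (pi _) => [[y c]|].
have adjE x : x \in val (T j) -> H (inl (phi x, s x)) (pi (inr (j, p))).
  by move=> Tx; move: (al x Tx); rewrite /aligned_at piE // => /andP [].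
have piE_inj x1 x2 : x1 \in val (T j) -> x2 \in val (T j) ->
    (phi x1, s x1) = (phi x2, s x2) -> x1 = x2.
  by move=> T1 T2 [e1 e2]; have := piE _ T1; rewrite e1 e2 -(piE _ T2) => /perm_inj [].
(* Two variable vertices have no common variable neighbour, so pi sends the
   constraint vertex (j, p) to a constraint vertex. *)
have [j' [q piC]] : exists j' q, pi (inr (j, p)) = inr (j', q).
  case piC: (pi (inr (j, p))) => [zc|[j' q]]; last by exists j', q.
  have [y0 [y1 [Ty0 Ty1 /negP[]]]] :
      exists y0 y1, [/\ y0 \in val (T j), y1 \in val (T j) & y0 != y1].
    by apply/card_gt1P; rewrite (eqP (valP (T j))).
  apply/eqP/piE_inj => //; apply: adjC_var_nbrs (adjE _ Ty0) (adjE _ Ty1) _.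
  by rewrite piC.
have phiT x : x \in val (T j) ->
    phi x \in val (T j') /\ s x = assigned T [ffun _ => false] j' q (phi x).
  by move=> Tx; have := adjE _ Tx; rewrite piC => /andP [? /eqP].
have phi_inj : {in val (T j) &, injective phi}.
  by move=> x1 x2 T1 T2 e; apply: piE_inj; rewrite // (phiT _ T1).2 (phiT _ T2).2 e.
transitivity (\big[addb/false]_(x in val (T j)) assigned T [ffun _ => false] j' q (phi x)).
  by apply: eq_bigr => x /phiT [].
by rewrite (assigned_parity_image _ _ (eqP (valP (T j))) phi_inj) ?ffunE // => x /phiT [].
Qed.

Lemma aligned_sat_or_within j :
  (forall p x, x \in val (T j) -> aligned_at j p x) ->
  sat_or_within pi_assignment broken_vars (T j) (b j).
Proof.
move=> al; rewrite /sat_or_within.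
case: (boolP (val (T j) \subset broken_vars)) => [_|/subsetPn [x0 Tx0 x0S]].
  by rewrite orbT.
rewrite orbF; have [p ind] := assigned_indicator b Tx0.
(* x0 is outside S, so the images of x0 |-> 0 and x0 |-> 1 carry opposite signs. *)
have sign_x0 : sign_of (pi (inl (x0, b j))) = addb (pi_assignment x0) (b j).
  case bj: (b j); last by rewrite addbF /pi_assignment ffunE.
  have [p' p'0] := assigned_surj b false Tx0.
  have /andP [var0 _] := al p' x0 Tx0; have /andP [var1 _] := al p x0 Tx0.
  rewrite p'0 in var0; rewrite ind // eqxx bj in var1.
  by rewrite addbT pi_assignment_flip.
have := aligned_parity (al p).
rewrite (eq_bigr (fun x => addb (pi_assignment x) ((x == x0) && b j))) => [|x Tx]; last first.
  by rewrite ind //; case: eqP => [-> //|_]; rewrite addbF /pi_assignment ffunE.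
have rhs_parity : \big[addb/false]_(x in val (T j)) ((x == x0) && b j) = b j.
  by rewrite (bigD1 x0) //= eqxx big1 ?addbF // => x /andP [_ /negbTE ->].
rewrite big_split /= rhs_parity.
by case: (\big[addb/false]_(_ in _) _); case: (b j).
Qed.

Definition equation_of (u : V) : option 'I_m := if u is inr (j, _) then Some j else None.

Lemma card_violated_le :
  #|[set j | ~~ sat_or_within pi_assignment broken_vars (T j) (b j)]| <=
  #|lost_edges| + 14 * n.
Proof.
set bad := [set j | _].
(* Charge each violated equation to an incidence of its clique that pi loses or
   misplaces. *)
have sub : Some @: bad \subset
    [set equation_of vu.2 | vu in lost_incidences :|: misplaced_incidences].
  apply/subsetP => _ /imsetP [j + ->]; rewrite inE => j_bad.
  have [/forallP al|] := boolP [forall p, forall x in val (T j), aligned_at j p x].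
    case/negP: j_bad; apply: aligned_sat_or_within => p x Tx.
    exact: (forall_inP (al p)).
  rewrite negb_forall => /existsP [p]; rewrite negb_forall_in => /exists_inP [x Tx].
  rewrite /aligned_at => not_al; apply/imsetP.
  exists (inl (x, assigned T b j p x), inr (j, p)) => //.
  by move: not_al; rewrite !inE /= /var_con Tx eqxx; case: is_var; case: adjC.
rewrite -(card_imset _ (@Some_inj _)); apply: leq_trans (subset_leq_card sub) _.
apply: leq_trans (leq_imset_card _ _) (leq_trans (leq_card_setU _ _) _).
exact: leq_add card_lost_incidences card_misplaced_incidences.
Qed.

End Alignment.

Lemma leq_card_bigcup (I T : finType) (P : pred I) (F : I -> {set T}) :
  #|\bigcup_(i | P i) F i| <= \sum_(i | P i) #|F i|.
Proof.
elim/big_rec2: _ => [|i A s _ le_As]; first by rewrite cards0.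
by apply: leq_trans (leq_card_setU _ _) _; rewrite leq_add2l.
Qed.

Lemma sum_prod_ffun2 (A B : finType) m (F : A -> B -> nat) :
  \sum_(C : {ffun 'I_m -> A} * {ffun 'I_m -> B}) \prod_(j < m) F (C.1 j) (C.2 j) =
  (\sum_a \sum_b F a b) ^ m.
Proof.
rewrite -(pair_bigA _ (fun (f : {ffun 'I_m -> A}) (g : {ffun 'I_m -> B}) =>
  \prod_(j < m) F (f j) (g j))) /=.
under eq_bigr do rewrite -(bigA_distr_bigA (fun j => F _)).
by rewrite -(bigA_distr_bigA (fun j a => \sum_b F a b)) prod_nat_const card_ord.
Qed.

Lemma leq_wexpn2r a b e : a <= b -> a ^ e <= b ^ e.
Proof. by case: e => [//|e] le_ab; rewrite leq_exp2r. Qed.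

Lemma card_sets n : #|{: {set 'I_n}}| = 2 ^ n.
Proof.
have := card_powerset [set: 'I_n]; rewrite cardsT card_ord => <-.
by rewrite -cardsT; apply: eq_card => A; rewrite !inE subsetT.
Qed.

Lemma card_triples n : #|{: Triple n}| = 'C(n, 3).
Proof.
rewrite card_sig; have := card_draws 'I_n 3; rewrite card_ord => <-.
by apply: eq_card => A; rewrite !inE.
Qed.

Lemma card_triples_sub n (S : {set 'I_n}) :
  #|[set t : Triple n | val t \subset S]| <= 'C(#|S|, 3).
Proof.
rewrite -cards_draws -(card_imset _ val_inj); apply/subset_leq_card/subsetP.
by move=> _ /imsetP [t + ->]; rewrite !inE => ->; rewrite (valP t).
Qed.

Lemma leq_bin3_fifth s n : 5 * s <= n -> 100 * 'C(s, 3) <= 'C(n, 3).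
Proof.
move=> le_sn; have bin3E k : 'C(k, 3) * 6 = k * (k - 1) * (k - 2).
  by rewrite (bin_ffact k 3) !ffactnSr ffactn0 mul1n; lia.
rewrite -(leq_pmul2r (isT : 0 < 6)) -mulnA !bin3E.
have [s_le2|s_gt2] := leqP s 2; first by case: s le_sn s_le2 => [|[|[|]]].
have le1 : 5 * (s - 1) <= n - 1 by lia.
have le2 : 5 * (s - 2) <= n - 2 by lia.
by apply: leq_trans (leq_mul (leq_mul le_sn le1) le2); nia.
Qed.

Section Counting.
Variables n m : nat.
Implicit Types (sg : {ffun 'I_n -> bool}) (S : {set 'I_n}) (C : Instance n m).
Local Notation pairs := ({ffun 'I_n -> bool} * {set 'I_n})%type.

Definition nviolated sg S C :=
  #|[set j | ~~ sat_or_within sg S (C.1 j) (C.2 j)]|.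

Definition weight sg S :=
  \sum_(t : Triple n) \sum_(be : bool) 2 ^ sat_or_within sg S t be.

Lemma prod_weightE sg S C :
  \prod_(j < m) 2 ^ sat_or_within sg S (C.1 j) (C.2 j) = 2 ^ (m - nviolated sg S C).
Proof.
rewrite -expn_sum; congr (2 ^ _); set A := [set j | sat_or_within sg S (C.1 j) (C.2 j)].
have -> : nviolated sg S C = #|~: A| by apply: eq_card => j; rewrite !inE.
rewrite (_ : m - #|~: A| = #|A|); last by rewrite [RHS]cardsCs card_ord.
rewrite -sum1_card [RHS]big_mkcond /=.
by apply: eq_bigr => j _; rewrite inE; case: sat_or_within.
Qed.

Lemma card_few_violated sg S k :
  #|[set C | nviolated sg S C <= k]| * 2 ^ m <= 2 ^ k * weight sg S ^ m.
Proof.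
set few := [set C | _]; rewrite -sum_prod_ffun2 big_distrr -sum1_card big_distrl /=.
rewrite [X in _ <= X](bigID (mem few)) /=; apply: leq_trans (leq_addr _ _).
apply: leq_sum => C; rewrite inE mul1n prod_weightE -expnD => le_k.
by rewrite leq_exp2l //; lia.
Qed.

Lemma weight_le sg S : 5 * #|S| <= n -> 100 * weight sg S <= 302 * #|{: Triple n}|.
Proof.
move=> le_Sn.
have le_sum : weight sg S <= \sum_(t : Triple n) (3 + 2 * (val t \subset S)).
  apply: leq_sum => t _; rewrite big_bool /sat_or_within.
  by case: (val t \subset S); case: (\big[addb/false]_(x in val t) sg x).
have sumE : \sum_(t : Triple n) (3 + 2 * (val t \subset S)) =
    3 * #|{: Triple n}| + 2 * #|[set t : Triple n | val t \subset S]|.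
  rewrite big_split sum_nat_const -big_distrr /= mulnC; congr (_ + 2 * _).
  rewrite -sum1_card [RHS]big_mkcond.
  by apply: eq_bigr => t _; rewrite inE; case: (_ \subset _).
(* A triple contributes 2^1 + 2^0, or 2^1 + 2^1 if it lies inside S, and by the
   choice of S at most 'C(n, 3) / 100 triples do. *)
have := card_triples_sub S; have := leq_bin3_fifth le_Sn.
by rewrite card_triples in sumE *; lia.
Qed.

Definition bad_instances := [set C : Instance n m |
  [exists sg : {ffun 'I_n -> bool}, exists S : {set 'I_n},
    (5 * #|S| <= n) && (nviolated sg S C <= 15 * n)]].

Lemma card_bad_instances :
  #|bad_instances| * 2 ^ m * 100 ^ m <= 2 ^ (17 * n) * (302 * #|{: Triple n}|) ^ m.
Proof.
pose few (sS : pairs) := [set C | nviolated sS.1 sS.2 C <= 15 * n].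
have sub : bad_instances \subset \bigcup_(sS : pairs | 5 * #|sS.2| <= n) few sS.
  apply/subsetP => C; rewrite inE => /existsP [sg /existsP [S /andP [le_S few_C]]].
  by apply/bigcupP; exists (sg, S); rewrite // inE.
have le_few (sS : pairs) : 5 * #|sS.2| <= n ->
    #|few sS| * 2 ^ m * 100 ^ m <= 2 ^ (15 * n) * (302 * #|{: Triple n}|) ^ m.
  move=> le_S; apply: leq_trans (leq_mul (card_few_violated _ _ _) (leqnn _)) _.
  by rewrite -mulnA -expnMn leq_mul2l leq_wexpn2r ?orbT // mulnC weight_le.
apply: leq_trans (_ : (\sum_(sS : pairs | 5 * #|sS.2| <= n) #|few sS|) * 2 ^ m * 100 ^ m <= _).
  rewrite !leq_mul2r; apply/orP; right; apply/orP; right.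
  exact: leq_trans (subset_leq_card sub) (leq_card_bigcup _ _).
rewrite !big_distrl /=; apply: leq_trans (leq_sum _ le_few) _.
rewrite sum_nat_const; apply: leq_trans (leq_mul (max_card _) (leqnn _)) _.
rewrite card_prod card_ffun card_bool card_ord card_sets mulnA -!expnD.
by rewrite leq_mul2r leq_exp2l ?orbT //; lia.
Qed.

End Counting.

Lemma leq_pow2_302_400 n m : 72 * n <= m -> 2 ^ (18 * n) * 302 ^ m <= 400 ^ m.
Proof.
move=> le_nm; have le_302 : 302 ^ m <= 4 ^ m * 80 ^ m by rewrite -expnMn leq_wexpn2r.
rewrite -[400]/(5 * 80) expnMn; apply: leq_trans (leq_mul (leqnn _) le_302) _.
rewrite mulnA leq_mul2r -(subnKC le_nm) [4 ^ _]expnD [5 ^ _]expnD mulnA.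
apply/orP; right; apply: leq_mul; last by apply: leq_wexpn2r.
have e4 : 4 ^ (72 * n) = (4 ^ 4) ^ (18 * n) by rewrite -expnM mulnA.
have e5 : 5 ^ (72 * n) = (5 ^ 4) ^ (18 * n) by rewrite -expnM mulnA.
by rewrite e4 e5 -expnMn; apply: leq_wexpn2r.
Qed.

Lemma card_Instance n m : #|{: Instance n m}| = #|{: Triple n}| ^ m * 2 ^ m.
Proof. by rewrite card_prod !card_ffun card_ord card_bool. Qed.

Lemma card_bad_instances_small n m :
  72 * n <= m -> #|bad_instances n m| * 2 ^ n <= #|{: Instance n m}|.
Proof.
move=> le_nm; rewrite card_Instance.
have pos : 0 < 2 ^ m * 100 ^ m by rewrite muln_gt0 !expn_gt0.
rewrite -(leq_pmul2r pos) mulnAC mulnA.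
apply: leq_trans (leq_mul (card_bad_instances n m) (leqnn _)) _.
have := leq_pow2_302_400 le_nm.
rewrite -[400]/(2 * 2 * 100) !expnMn (_ : 18 * n = 17 * n + n); last by lia.
rewrite expnD; set A := 2 ^ (17 * n); set N := #|{: Triple n}| ^ m.
move=> le_pow.
rewrite (_ : A * (302 ^ m * N) * 2 ^ n = A * 2 ^ n * 302 ^ m * N); last by ring.
rewrite (_ : N * 2 ^ m * (2 ^ m * 100 ^ m) = 2 ^ m * 2 ^ m * 100 ^ m * N); last by ring.
exact: leq_mul le_pow (leqnn N).
Qed.

Lemma bad_of_lost_edges n m (C : Instance n m) pi :
  5 * #|lost_edges C.1 C.2 pi| <= n -> C \in bad_instances n m.
Proof.
case: C pi => T b pi /= small; rewrite inE; apply/existsP; exists (pi_assignment pi).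
apply/existsP; exists (broken_vars T pi).
have := card_broken_vars T b pi; have := card_violated_le T b pi.
rewrite /nviolated /=; lia.
Qed.

Import Order.TTheory GRing.Theory Num.Theory.
Local Open Scope ring_scope.

Lemma GI_inst_lost_edges (R : realType) n m (C : Instance n m) (d : R) :
  0 <= d < 1 -> 1 - d <= GI_inst R C ->
  exists pi, #|lost_edges C.1 C.2 pi|%:R <= d * (2 * n + 28 * m)%:R.
Proof.
case: C => T b /andP [d_ge0 d_lt1]; rewrite /GI_inst /GI /=.
set EG := Edges _; set EH := Edges _.
have [|pi ->] :=
  bigop.eq_bigmax (fun pi : {perm Vtx n m} => #|[set e in EG | pi @: e \in EH]|).
  by apply/card_gt0P; exists 1%g.
set P := #|_|; set E := maxn _ _ => GI_ge; exists pi.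
have E_gt0 : (0 < E)%N.
  by rewrite lt0n; apply/negP => /eqP E0; move: GI_ge; rewrite E0 invr0 mulr0; lra.
have P_ge : (1 - d) * E%:R <= P%:R by rewrite -ler_pdivlMr ?ltr0n.
have EG_split : (#|lost_edges T b pi| + P = #|EG|)%N.
  rewrite -(cardsID [set e : {set Vtx n m} | pi @: e \in EH] EG) addnC.
  by congr (_ + _)%N; apply: eq_card => e; rewrite !inE // andbC.
have EG_le : #|EG|%:R <= E%:R :> R by rewrite ler_nat leq_maxl.
have E_le : d * E%:R <= d * (2 * n + 28 * m)%:R.
  by rewrite ler_wpM2l // ler_nat geq_max !card_Edges.
move/(congr1 (fun k => k%:R : R)): EG_split; rewrite natrD; lra.
Qed.

Lemma GI_inst_bad (R : realType) n m (C : Instance n m) (d : R) :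
  0 <= d < 1 -> (2 * n + 28 * m)%:R * d <= n%:R / 5 ->
  1 - d <= GI_inst R C -> C \in bad_instances n m.
Proof.
move=> d01 budget /(GI_inst_lost_edges d01) [pi lost_le].
by apply: (bad_of_lost_edges (pi := pi)); rewrite -(ler_nat R) natrM; lra.
Qed.

Lemma prob_ge_of_bad (R : realType) n m (E : pred (Instance n m))
    (B : {set Instance n m}) (eps : R) :
  0 < eps -> eps^-1 < 2 ^+ n -> (0 < #|{: Instance n m}|)%N ->
  (forall C, ~~ E C -> C \in B) -> (#|B| * 2 ^ n <= #|{: Instance n m}|)%N ->
  1 - eps <= prob E R.
Proof.
move=> eps_gt0 eps_lt I_gt0 EB B_small; rewrite /prob.
set I := #|{: Instance n m}|; set K := #|~: [set C | E C]|.
have K_le : (K * 2 ^ n <= I)%N.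
  apply: leq_trans B_small; rewrite leq_mul2r; apply/orP; right.
  by apply/subset_leq_card/subsetP => C; rewrite !inE => /EB.
have := cardsC [set C | E C]; rewrite -/K -/I => /(congr1 (fun k => k%:R : R)).
move: K_le; rewrite -(ler_nat R) natrM natrX natrD => K_le I_split.
have epsX : 1 <= eps * 2 ^+ n.
  by rewrite -[X in X <= _](mulfV (lt0r_neq0 eps_gt0)) ler_wpM2l // ltW.
have K_ge0 : 0 <= K%:R :> R by [].
rewrite ler_pdivlMr ?ltr0n //; nra.
Qed.

Lemma lt_expr2_of_truncn (R : archiFieldType) (x : R) n :
  0 <= x -> (Num.truncn x < n)%N -> x < 2 ^+ n.
Proof.
move=> x_ge0; rewrite truncn_lt_nat // => /lt_le_trans; apply.
by rewrite -natrX ler_nat ltnW // ltn_expl.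
Qed.

Lemma inv95_sqr_itv (R : realFieldType) (c : R) : 1 <= c -> 0 <= (95 * c ^+ 2)^-1 < 1.
Proof.
move=> c_ge1; have pos : 0 < 95 * c ^+ 2 by rewrite mulr_gt0 ?exprn_gt0 //; lra.
by rewrite invr_ge0 ltW //= invf_lt1 // expr2; nra.
Qed.

Lemma ge100_of_ge_1e10 (R : realFieldType) (c : R) : 10 ^+ 10 <= c -> 100 <= c.
Proof.
move=> c_ge; apply: le_trans c_ge; rewrite -[10%N]/(2 + 8)%N exprD expr2.
by have := exprn_ege1 8 (_ : 1 <= 10 :> R); nra.
Qed.

Lemma loss_budget (R : realFieldType) (c : R) n m : 100 <= c -> m%:R <= c * n%:R ->
  (2 * n + 28 * m)%:R * (95 * c ^+ 2)^-1 <= n%:R / 5.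
Proof.
move=> c_ge m_le; have n_ge0 : 0 <= n%:R :> R by [].
have cn_ge : 100 * n%:R <= c * n%:R by rewrite ler_wpM2r.
have ccn_ge : 100 * (c * n%:R) <= c * (c * n%:R).
  by rewrite ler_wpM2r // (le_trans _ cn_ge) // mulr_ge0.
by rewrite ler_pdivrMr ?mulr_gt0 ?exprn_gt0 ?natrD ?natrM //; lra.
Qed.

Lemma truncn_ge_72n (R : realType) (c : R) n : 100 <= c -> (72 * n <= Num.truncn (c * n%:R))%N.
Proof.
move=> c_ge; rewrite truncn_ge_nat ?natrM; last by apply: mulr_ge0 => //; lra.
by apply: ler_wpM2r => //; lra.
Qed.

Unset Implicit Arguments.

Theorem lemma5p1 (R : realType) (c : R) :
  10 ^+ 10 <= c ->
  forall eps : R, 0 < eps ->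
  exists N : nat, forall n : nat, (N <= n)%N ->
    let m := Num.truncn (c * n%:R) in
    1 - eps <=
      prob (fun C : Instance n m => GI_inst R C < 1 - (95 * c ^+ 2)^-1) R.
Proof.
move=> /ge100_of_ge_1e10 c_ge eps eps_gt0.
exists (maxn 3 (Num.truncn eps^-1).+1) => n; rewrite geq_max => /andP [n_ge3 n_gt].
cbv zeta; set m := Num.truncn (c * n%:R).
have d_itv : 0 <= (95 * c ^+ 2)^-1 < 1 by apply: inv95_sqr_itv; lra.
have m_le : m%:R <= c * n%:R by rewrite truncn_le mulr_ge0 //; lra.
apply: (prob_ge_of_bad (B := bad_instances n m)) => //.
- by apply: lt_expr2_of_truncn; rewrite // invr_ge0 ltW.
- by rewrite card_Instance muln_gt0 !expn_gt0 card_triples bin_gt0 n_ge3.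
- by move=> C; rewrite -leNgt; apply: GI_inst_bad d_itv (loss_budget c_ge m_le).
- exact/card_bad_instances_small/truncn_ge_72n.
Qed.
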